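(* Let $G$ be an $\alpha_i$-metric graph ($i\ge 0$ an integer) and $u$ an arbitrary vertex. Then for every $v\in F(u)$, $e(v)\ge diam(G)-3i-2$.
   Context: All graphs are finite, connected, unweighted, undirected, simple; $d(u,v)$ is the shortest-path distance. $I(u,v)=\{x: d(u,x)+d(x,v)=d(u,v)\}$. A graph is $\alpha_i$-metric if for all vertices $u,v,w,x$: whenever $v\in I(u,w)$, $w\in I(v,x)$ and $v,w$ are adjacent, then $d(u,x)\ge d(u,v)+d(v,x)-i$. $e(v)=\max_w d(w,v)$, $diam(G)=\max_v e(v)$, and $F(u)=\{w: d(u,w)=e(u)\}$ is the set of vertices most distant from $u$. *)

From mathcomp Require Import all_boot.
Set Implicit Arguments. Unset Strict Implicit. Unset Printing Implicit Defensive.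

Definition simple_graph (T : finType) (e : rel T) : Prop :=
  symmetric e /\ irreflexive e.

Definition graph_connected (T : finType) (e : rel T) : Prop :=
  forall u v : T, connect e u v.

Definition ball (T : finType) (e : rel T) (u : T) (n : nat) : {set T} :=
  iter n (fun S : {set T} => S :|: [set y | [exists x in S, e x y]]) [set u].

(* Shortest-path distance: least n with v within n steps of u
   (searched over 0 .. #|T|-1, which suffices in a connected graph). *)
Definition dist (T : finType) (e : rel T) (u v : T) : nat :=
  find (fun n => v \in ball e u n) (iota 0 #|T|).

Definition in_interval (T : finType) (e : rel T) (u v x : T) : bool :=
  dist e u x + dist e x v == dist e u v.

Definition alpha_metric (T : finType) (e : rel T) (i : nat) : Prop :=
  forall u v w x : T,
    in_interval e u w v -> in_interval e v x w -> e v w ->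
    dist e u v + dist e v x <= dist e u x + i.

Definition ecc (T : finType) (e : rel T) (v : T) : nat :=
  \max_(w : T) dist e v w.

Definition diam (T : finType) (e : rel T) : nat :=
  \max_(v : T) ecc e v.

Definition farthest (T : finType) (e : rel T) (u : T) : {set T} :=
  [set w | dist e u w == ecc e u].

From mathcomp Require Import all_boot zify.

Set Implicit Arguments. Unset Strict Implicit. Unset Printing Implicit Defensive.

(* For a pair x, y realising the diameter, let h = floor(d(x,y)/2) and let S be
   the middle layer {z in I(x,y) : d(x,z) = h} of the x-y geodesics.  The
   alpha_i condition makes S thin (its vertices are pairwise at distance at
   most i+1), and for every vertex w it lets us walk inside S towards w until
   we reach some z in S lying, up to i, on a geodesic from w to x or to y, so
   that h + d(z,w) <= e(w) + i.  Doing this for u and for v in F(u) yields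
   e(u) = d(u,v) <= (e(u) - h + i) + (i + 1) + (e(v) - h + i). *)

Section Balls.

Variables (T : finType) (e : rel T).

Lemma ball0 u v : (v \in ball e u 0) = (v == u).
Proof. by rewrite /ball inE. Qed.

Lemma ballS u n v :
  (v \in ball e u n.+1) = (v \in ball e u n) || [exists x in ball e u n, e x v].
Proof. by rewrite /ball iterS in_setU inE. Qed.

Lemma ball_widen u m n v : m <= n -> v \in ball e u m -> v \in ball e u n.
Proof.
move=> /subnK <-; elim: (n - m) => [|d IH] Hv //.
by rewrite addSn ballS IH.
Qed.

Lemma ball_trans u v w a b :
  v \in ball e u a -> w \in ball e v b -> w \in ball e u (a + b).
Proof.
move=> Hv; elim: b w => [|b IH] w; first by rewrite ball0 addn0 => /eqP ->.
rewrite ballS addnS ballS => /orP [/IH -> //|/existsP [x /andP [Hx Hxw]]].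
by apply/orP; right; apply/existsP; exists x; rewrite IH.
Qed.

Lemma ball_edge x y : e x y -> y \in ball e x 1.
Proof.
by move=> Hxy; rewrite ballS; apply/orP; right; apply/existsP; exists x; rewrite ball0 eqxx.
Qed.

Lemma ball_path u p : path e u p -> last u p \in ball e u (size p).
Proof.
elim: p u => [|x p IH] u /=; first by rewrite ball0.
by case/andP=> /ball_edge Hx /IH; apply: ball_trans Hx.
Qed.

Lemma dist_min u v n : v \in ball e u n -> dist e u v <= n.
Proof.
move=> Hv; rewrite leqNgt; apply/negP => Hlt.
have Hsize := find_size (fun n => v \in ball e u n) (iota 0 #|T|).
rewrite size_iota in Hsize.
have := before_find 0 Hlt.
by rewrite nth_iota ?add0n ?Hv // (leq_trans Hlt Hsize).
Qed.

End Balls.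

Section GraphDistance.

Variables (T : finType) (e : rel T).
Hypotheses (e_sym : symmetric e) (e_irr : irreflexive e)
  (e_conn : graph_connected e).

Local Notation dist := (dist e).

(* A shortest walk visits distinct vertices, hence has fewer than #|T| edges. *)
Lemma ball_connected u v : exists2 n, n < #|T| & v \in ball e u n.
Proof.
have /connectP [p Hp ->] := e_conn u v.
case: (shortenP Hp) => q Hq /card_uniqP /= Hcard _.
exists (size q); last exact: ball_path.
by have := max_card (mem (u :: q)); rewrite Hcard.
Qed.

Lemma dist_ball u v : v \in ball e u (dist u v).
Proof.
have [n Hn Hv] := ball_connected u v.
have Hhas : has (fun n => v \in ball e u n) (iota 0 #|T|).
  by apply/hasP; exists n => //; rewrite mem_iota.
have := nth_find 0 Hhas.
by rewrite nth_iota // -[X in _ < X](size_iota 0 #|T|) -has_find.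
Qed.

Lemma mem_ball u v n : (v \in ball e u n) = (dist u v <= n).
Proof.
apply/idP/idP; first exact: dist_min.
by move=> Hn; apply: ball_widen Hn (dist_ball u v).
Qed.

Lemma distxx u : dist u u = 0.
Proof. by apply/eqP; rewrite -leqn0 -mem_ball ball0. Qed.

Lemma dist_eq0 u v : (dist u v == 0) = (u == v).
Proof.
apply/idP/eqP => [/eqP H|->]; last by rewrite distxx.
by have := dist_ball u v; rewrite H ball0 eq_sym => /eqP.
Qed.

Lemma ball_sym u v n : v \in ball e u n -> u \in ball e v n.
Proof.
elim: n v => [|n IH] v; first by rewrite !ball0 eq_sym.
rewrite ballS => /orP [/IH|/existsP [x /andP [/IH Hx Hxv]]].
  by apply: ball_widen.
by rewrite -add1n; apply: ball_trans Hx; rewrite ball_edge // e_sym.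
Qed.

Lemma distC u v : dist u v = dist v u.
Proof.
by apply/anti_leq/andP; split; rewrite -mem_ball; apply: ball_sym; apply: dist_ball.
Qed.

Lemma dist_triangle u v w : dist u w <= dist u v + dist v w.
Proof. by rewrite -mem_ball; apply: ball_trans; apply: dist_ball. Qed.

Lemma dist_edge a b : e a b -> dist a b = 1.
Proof.
move=> Hab; apply/anti_leq; rewrite -mem_ball ball_edge //=.
by rewrite lt0n dist_eq0; apply: contraTneq Hab => ->; rewrite e_irr.
Qed.

Lemma dist_neighbor_le a b c : e a b -> dist c b <= (dist c a).+1.
Proof. by move=> /dist_edge Hab; rewrite -addn1 -Hab dist_triangle. Qed.

Lemma neighbor_closer z w n : dist z w = n.+1 -> exists2 g, e z g & dist g w = n.
Proof.
move=> Hzw; have := dist_ball w z.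
rewrite distC Hzw ballS => /orP [/dist_min|/existsP [g /andP [Hg Hgz]]].
  by rewrite distC Hzw ltnn.
exists g; first by rewrite e_sym.
have := dist_min Hg; have := dist_neighbor_le w Hgz; rewrite distC Hzw distC; lia.
Qed.

Lemma dist_le_ecc w v : dist w v <= ecc e w.
Proof. exact: leq_bigmax. Qed.

Definition slice (x y : T) (k : nat) : {set T} :=
  [set z | in_interval e x y z & dist x z == k].

Lemma in_slice x y k z :
  (z \in slice x y k) = (dist x z + dist z y == dist x y) && (dist x z == k).
Proof. by rewrite inE. Qed.

Lemma slice_nonempty x y k : k <= dist x y -> exists z, z \in slice x y k.
Proof.
elim: k => [|k IH] Hk; first by exists x; rewrite in_slice distxx add0n !eqxx.
have [z Hz] := IH (ltnW Hk); move: Hz; rewrite in_slice => /andP [/eqP Hxy /eqP Hxz].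
have [g Hzg Hgy] : exists2 g, e z g & dist g y = (dist z y).-1.
  by apply: neighbor_closer; rewrite prednK //; lia.
exists g; rewrite in_slice.
have := dist_triangle x g y; have := dist_neighbor_le x Hzg; lia.
Qed.

Section AlphaMetric.

Variable i : nat.
Hypothesis alpha : alpha_metric e i.

Lemma alpha_edge u v w x : e v w ->
  dist u w = (dist u v).+1 -> dist v x = (dist w x).+1 ->
  dist u v + dist v x <= dist u x + i.
Proof.
move=> Hvw Huw Hvx; have Evw := dist_edge Hvw; apply: alpha Hvw.
  by rewrite /in_interval Evw Huw addn1.
by rewrite /in_interval Evw Hvx add1n.
Qed.

Lemma alpha_away_step a y z p : e z p -> dist p y = (dist z y).+1 ->
  dist a z <= dist a p \/ dist a p + (dist z y).+1 <= dist a y + i.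
Proof.
move=> Hzp Hpy; have Hpz : e p z by rewrite e_sym.
have [|Hlt] := leqP (dist a z) (dist a p); first by left.
right; rewrite -Hpy; apply: (alpha_edge Hpz) Hpy.
by have := dist_neighbor_le a Hpz; lia.
Qed.

Lemma slice_toward x y k w z : z \in slice x y k ->
  exists2 z', z' \in slice x y k &
    dist x z' + dist z' w <= dist x w + i \/ dist y z' + dist z' w <= dist y w + i.
Proof.
move Hn : (dist z w) => n; elim: n z Hn => [|n IH] z Hzw Hz.
  move/eqP: Hzw; rewrite dist_eq0 => /eqP Ezw; subst z.
  by exists w => //; left; rewrite distxx addn0 leq_addr.
have [g Hzg Hgw] := neighbor_closer Hzw.
have Hgzw : dist z w = (dist g w).+1 by rewrite Hzw Hgw.
(* A step leaving the slice moves away from x or from y, which is exactly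
   the configuration of the alpha_i condition. *)
have [Hxg|Hxg] := eqVneq (dist x g) (dist x z).+1.
  by exists z => //; left; apply: alpha_edge Hzg Hxg Hgzw.
have [Hyg|Hyg] := eqVneq (dist y g) (dist y z).+1.
  by exists z => //; right; apply: alpha_edge Hzg Hyg Hgzw.
apply: IH Hgw _; move: Hz; rewrite !in_slice => /andP [/eqP Hxy /eqP Hxz].
have := dist_neighbor_le x Hzg; have := dist_neighbor_le y Hzg.
have Hgz : e g z by rewrite e_sym.
have := dist_neighbor_le x Hgz; have := dist_neighbor_le y Hgz.
have := dist_triangle x g y; have := distC g y; have := distC z y; lia.
Qed.

Lemma slice_diam x y k z z' :
  z \in slice x y k -> z' \in slice x y k -> dist z z' <= i.+1.
Proof.
elim: k z z' => [|k IH] z z'.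
  by rewrite !in_slice !dist_eq0 => /andP [_ /eqP <-] /andP [_ /eqP <-]; rewrite distxx.
have below c : c \in slice x y k.+1 ->
    exists2 p, e c p & [/\ p \in slice x y k, dist p y = (dist c y).+1
                         & dist c y = dist x y - k.+1].
  rewrite in_slice => /andP [/eqP Hxy /eqP Hxc].
  have [p Hcp Hpx] : exists2 p, e c p & dist p x = k by apply: neighbor_closer; rewrite distC.
  have := dist_triangle x p y; have := dist_neighbor_le y Hcp.
  rewrite (distC y p) (distC y c) (distC x p) Hpx => Hpy Hxp.
  by exists p => //; split; rewrite ?in_slice ?(distC x p) ?Hpx; lia.
move=> /below [p Hzp [/IH Hp Hpy Hzy]] /below [p' Hzp' [Hp' Hp'y Hz'y]].
have := Hp _ Hp'.
have := alpha_away_step z Hzp' Hp'y; have := alpha_away_step p' Hzp Hpy.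
have := dist_triangle z p' z'; have := dist_triangle z p p'.
rewrite (distC p' z') (distC p' z) (distC p' p) (dist_edge Hzp) (dist_edge Hzp').
lia.
Qed.

Lemma slice_close x y w k : k.*2 <= dist x y ->
  exists2 z, z \in slice x y k & k + dist z w <= ecc e w + i.
Proof.
move=> Hk; have [|z0 Hz0] := @slice_nonempty x y k; first by lia.
have [z Hz Hnear] := slice_toward w Hz0; exists z => //.
move: Hz; rewrite in_slice => /andP [/eqP Hxy /eqP Hxz].
move: Hnear; have := dist_le_ecc w x; have := dist_le_ecc w y.
rewrite (distC w x) (distC w y) (distC y z) (distC z w); lia.
Qed.

End AlphaMetric.

End GraphDistance.

Theorem lemma10 (T : finType) (e : rel T) (i : nat) :
  simple_graph e -> graph_connected e -> alpha_metric e i ->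
  forall u v : T, v \in farthest e u ->
  diam e <= ecc e v + 3 * i + 2.
Proof.
move=> [e_sym e_irr] e_conn alpha u v; rewrite inE => /eqP Huv.
apply/bigmax_leqP => x _; apply/bigmax_leqP => y _.
have Hhalf : (dist e x y)./2.*2 <= dist e x y by lia.
have [zu Hzu Hu] := slice_close e_sym e_irr e_conn alpha u Hhalf.
have [zv Hzv Hv] := slice_close e_sym e_irr e_conn alpha v Hhalf.
have := slice_diam e_sym e_irr e_conn alpha Hzu Hzv.
have := dist_triangle e_conn u zu v.
have := dist_triangle e_conn zu zv v.
rewrite Huv (distC e_sym e_conn u zu); lia.
Qed.
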